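(* For every $n\ge 2$, it is possible to place $n-1$ queens on an $n\times n$ chessboard whose square $(i,j)$ ($1\le i,j\le n$) is labeled $|i-j|$ so that no two queens attack each other, where two queens attack each other if they lie in the same row, in the same column, or on squares with the same label.
   Context: The chessboard corresponds to the symmetric Toeplitz matrix $T_n$ with entries $t_{ij}=|i-j|$. *)

From mathcomp Require Import all_boot ssrint.
Set Implicit Arguments. Unset Strict Implicit. Unset Printing Implicit Defensive.

(* Square (i,j) of the n x n board, 0-indexed; the label |i-j| is invariant
   under the shift to 1-indexing. *)
Definition label n (s : 'I_n * 'I_n) : nat := `|(s.1 : nat) - (s.2 : nat)|%N.

Definition attack n (s t : 'I_n * 'I_n) : bool :=
  [|| s.1 == t.1, s.2 == t.2 | label s == label t].

Definition nonattacking n (Q : {set 'I_n * 'I_n}) : Prop :=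
  forall s t, s \in Q -> t \in Q -> s != t -> ~~ attack s t.

From mathcomp Require Import all_boot.
From mathcomp Require Import ssrint zify.

(* The queens occupy every row but the last.  Row [i] of the top half gets
   column [n-1-i] and label [n-1-2i]; row [i] of the bottom half gets column
   [n-2-i] and label [2i+2-n].  The two halves use disjoint column ranges, and
   their labels have opposite parities, while inside each half both column and
   label are strictly monotone in [i]. *)

Lemma nonattacking_graph (n k : nat) (c : nat -> nat) (hk : k <= n.+1) :
    (forall i, i < k -> c i < n.+1) ->
    {in gtn k &, injective c} ->
    {in gtn k &, injective (fun i : nat => `|i - c i|%N)} ->
  exists Q : {set 'I_n.+1 * 'I_n.+1}, #|Q| = k /\ nonattacking Q.
Proof.
move=> c_lt c_inj label_inj.
pose queen (i : 'I_k) : 'I_n.+1 * 'I_n.+1 := (widen_ord hk i, inord (c i)).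
have queen_inj : injective queen by move=> i j [] /val_inj.
exists (queen @: setT); split; first by rewrite card_imset // cardsT card_ord.
move=> _ _ /imsetP[i _ ->] /imsetP[j _ ->]; rewrite (inj_eq queen_inj) => ij.
rewrite /attack /label /= -!(inj_eq val_inj) /= !inordK ?c_lt //.
by rewrite (inj_in_eq c_inj) ?(inj_in_eq label_inj) ?inE // !orbb.
Qed.

Definition queen_col (n i : nat) : nat :=
  if i < n./2 then n.-1 - i else n - 2 - i.

Lemma half_bounds (n : nat) : n./2 * 2 <= n <= n./2 * 2 + 1.
Proof. by have := odd_double_half n; rewrite -muln2; case: odd => /=; lia. Qed.

Lemma queen_col_lt (n i : nat) : queen_col n.+1 i < n.+1.
Proof. by rewrite /queen_col; case: ifP; lia. Qed.

Lemma queen_col_inj (n : nat) : {in gtn n.-1 &, injective (queen_col n)}.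
Proof.
move=> i j /[!inE] ri rj; have := half_bounds n; rewrite /queen_col.
by case: ifP; case: ifP; lia.
Qed.

Lemma queen_label_inj (n : nat) :
  {in gtn n.-1 &, injective (fun i : nat => `|i - queen_col n i|%N)}.
Proof.
move=> i j /[!inE] ri rj; have := half_bounds n; rewrite /queen_col.
by case: ifP; case: ifP; lia.
Qed.

Theorem theorem3 (n : nat) (hn : 2 <= n) :
  exists Q : {set 'I_n * 'I_n}, #|Q| = n.-1 /\ nonattacking Q.
Proof.
case: n hn => [//|m] _.
apply: (@nonattacking_graph m m (queen_col m.+1)) => //.
- by move=> i _; rewrite queen_col_lt.
- exact: (queen_col_inj m.+1).
- exact: (queen_label_inj m.+1).
Qed.
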